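(* There exists a set $T$ of five terminals in the plane, no two on a common horizontal or vertical line, for which $N_{\varnothing}(T)$ is a bidirected Manhattan network on $T$ but is not of minimum length: its length is $34$, while a bidirected Manhattan network on $T$ of length $32$ exists.
   Context: For points $p,q$, $R(p,q)$ is the smallest closed axis-parallel rectangle containing $p$ and $q$; for terminals ${\bf t}_i,{\bf t}_j\in T$, $R_{i,j}=R({\bf t}_i,{\bf t}_j)$, which is empty if $R_{i,j}\cap T=\{{\bf t}_i,{\bf t}_j\}$. $\Gamma(T)$ is the grid formed by the horizontal and vertical lines through the terminals, restricted to the bounding box of $T$. An oriented subnetwork of $\Gamma(T)$ is a set of edges of $\Gamma(T)$ each directed in exactly one sense; its length is the total length of its edges. A bidirected Manhattan network on $T$ is an oriented subnetwork of $\Gamma(T)$ containing, for every ordered pair of distinct terminals $(t,t')$, a directed path from $t$ to $t'$ of length $|t^x-t'^x|+|t^y-t'^y|$. $N_{\varnothing}(T)$ is the oriented subnetwork consisting of the boundary edges of all empty rectangles $R_{i,j}$, where the boundary of $R_{i,j}$ is oriented clockwise if the segment ${\bf t}_i{\bf t}_j$ has positive slope and counterclockwise if it has negative slope. *)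

From Stdlib Require Import Reals List.
Import ListNotations.
Open Scope R_scope.

Definition point : Type := (R * R)%type.
Definition px (p : point) : R := fst p.
Definition py (p : point) : R := snd p.

Definition dedge : Type := (point * point)%type.

Definition l1 (p q : point) : R := Rabs (px p - px q) + Rabs (py p - py q).

(* Edges of the grid Gamma(T): segments between consecutive grid vertices
   on a horizontal (resp. vertical) line through a terminal.  Since all grid
   lines pass through terminals, this is automatically restricted to the
   bounding box of T. *)
Definition grid_edge (T : list point) (p q : point) : Prop :=
  let Xs := map px T in
  let Ys := map py T in
  (In (py p) Ys /\ py p = py q /\ In (px p) Xs /\ In (px q) Xs /\ px p <> px q /\
   forall x, In x Xs -> ~ (Rmin (px p) (px q) < x < Rmax (px p) (px q)))
  \/
  (In (px p) Xs /\ px p = px q /\ In (py p) Ys /\ In (py q) Ys /\ py p <> py q /\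
   forall y, In y Ys -> ~ (Rmin (py p) (py q) < y < Rmax (py p) (py q))).

Definition oriented_subnetwork (T : list point) (N : list dedge) : Prop :=
  NoDup N /\
  (forall p q, In (p, q) N -> grid_edge T p q) /\
  (forall p q, In (p, q) N -> ~ In (q, p) N).

Definition edge_len (e : dedge) : R := l1 (fst e) (snd e).

Definition net_length (N : list dedge) : R :=
  fold_right (fun e acc => edge_len e + acc) 0 N.

(* [dpath N s vs t]: s -> v1 -> ... -> vk = t is a directed path in N,
   where vs = [v1; ...; vk]. *)
Fixpoint dpath (N : list dedge) (s : point) (vs : list point) (t : point) : Prop :=
  match vs with
  | [] => s = t
  | v :: vs' => In (s, v) N /\ dpath N v vs' t
  end.

Fixpoint path_len (s : point) (vs : list point) : R :=
  match vs with
  | [] => 0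
  | v :: vs' => l1 s v + path_len v vs'
  end.

Definition bidirected_MN (T : list point) (N : list dedge) : Prop :=
  oriented_subnetwork T N /\
  forall t t', In t T -> In t' T -> t <> t' ->
    exists vs, dpath N t vs t' /\ path_len t vs = l1 t t'.

Definition in_rect (a b p : point) : Prop :=
  Rmin (px a) (px b) <= px p <= Rmax (px a) (px b) /\
  Rmin (py a) (py b) <= py p <= Rmax (py a) (py b).

Definition empty_rect (T : list point) (a b : point) : Prop :=
  forall t, In t T -> in_rect a b t -> t = a \/ t = b.

(* The directed segment p -> q lies on the boundary of R(a,b) and is
   oriented clockwise (y axis pointing up): top side left-to-right,
   right side top-to-bottom, bottom side right-to-left, left side
   bottom-to-top. *)
Definition cw_boundary (a b p q : point) : Prop :=
  let x1 := Rmin (px a) (px b) in let x2 := Rmax (px a) (px b) in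
  let y1 := Rmin (py a) (py b) in let y2 := Rmax (py a) (py b) in
  (py p = y2 /\ py q = y2 /\ x1 <= px p /\ px p < px q /\ px q <= x2) \/
  (px p = x2 /\ px q = x2 /\ y1 <= py q /\ py q < py p /\ py p <= y2) \/
  (py p = y1 /\ py q = y1 /\ x1 <= px q /\ px q < px p /\ px p <= x2) \/
  (px p = x1 /\ px q = x1 /\ y1 <= py p /\ py p < py q /\ py q <= y2).

Definition ccw_boundary (a b p q : point) : Prop := cw_boundary a b q p.

Definition pos_slope (a b : point) : Prop :=
  0 < (px b - px a) * (py b - py a).

Definition in_N_empty (T : list point) (p q : point) : Prop :=
  grid_edge T p q /\
  exists a b, In a T /\ In b T /\ a <> b /\ empty_rect T a b /\
    ((pos_slope a b /\ cw_boundary a b p q) \/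
     (~ pos_slope a b /\ ccw_boundary a b p q)).

From Stdlib Require Import Reals List Bool ZArith Lia FinFun.
Import ListNotations.
Open Scope R_scope.

(* The witness is T = {(0,0), (1,3), (2,4), (3,1), (4,2)}.  The
   empty rectangle R((2,4),(4,2)) contributes its upper-right corner (4,4) and
   the two edges (4,3)->(4,4)->(3,4) to N_empty(T); these edges are redundant,
   since every path using them can be rerouted through (3,3).  Removing them
   leaves a bidirected Manhattan network of length 32, while N_empty(T) has
   length 34. *)

Section DecidableMembership.
Variable A : Type.
Variable eqb : A -> A -> bool.
Hypothesis eqb_spec : forall x y, eqb x y = true <-> x = y.

Definition memb (x : A) (l : list A) : bool := existsb (eqb x) l.

Lemma memb_spec x l : memb x l = true <-> In x l.
Proof.
  unfold memb; rewrite existsb_exists; split.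
  - intros [y [Hy E]]; apply eqb_spec in E; subst; exact Hy.
  - intros H; exists x; split; [exact H | apply eqb_spec; reflexivity].
Qed.

Fixpoint nodupb (l : list A) : bool :=
  match l with
  | [] => true
  | x :: r => negb (memb x r) && nodupb r
  end.

Lemma nodupb_NoDup l : nodupb l = true -> NoDup l.
Proof.
  induction l as [|x r IH]; simpl; intros H; [constructor|].
  apply andb_true_iff in H as [Hx Hr]; constructor; [|exact (IH Hr)].
  rewrite negb_true_iff, <- not_true_iff_false, memb_spec in Hx; exact Hx.
Qed.
End DecidableMembership.

Arguments memb {A} eqb x l.
Arguments nodupb {A} eqb l.

Lemma IZR_eq_iff (x y : Z) : IZR x = IZR y <-> x = y.
Proof. split; [apply eq_IZR | intros ->; reflexivity]. Qed.

Lemma IZR_le_iff (x y : Z) : IZR x <= IZR y <-> (x <= y)%Z.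
Proof. split; [apply le_IZR | apply IZR_le]. Qed.

Lemma IZR_lt_iff (x y : Z) : IZR x < IZR y <-> (x < y)%Z.
Proof. split; [apply lt_IZR | apply IZR_lt]. Qed.

Lemma Rmin_IZR a b : Rmin (IZR a) (IZR b) = IZR (Z.min a b).
Proof.
  unfold Rmin; destruct (Rle_dec (IZR a) (IZR b)) as [h|h].
  - apply le_IZR in h; f_equal; lia.
  - apply Rnot_le_lt, lt_IZR in h; f_equal; lia.
Qed.

Lemma Rmax_IZR a b : Rmax (IZR a) (IZR b) = IZR (Z.max a b).
Proof.
  unfold Rmax; destruct (Rle_dec (IZR a) (IZR b)) as [h|h].
  - apply le_IZR in h; f_equal; lia.
  - apply Rnot_le_lt, lt_IZR in h; f_equal; lia.
Qed.

Lemma In_map_IZR_inv x l : In x (map IZR l) -> exists z, x = IZR z /\ In z l.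
Proof. rewrite in_map_iff; intros [z [<- Hz]]; eauto. Qed.

Lemma In_map_IZR z l : In (IZR z) (map IZR l) <-> In z l.
Proof.
  split; [|apply in_map].
  intros H; apply In_map_IZR_inv in H as [z' [E H]]; apply eq_IZR in E; subst; exact H.
Qed.

Lemma NoDup_map_IZR l : NoDup l -> NoDup (map IZR l).
Proof. apply Injective_map_NoDup; intros x y; apply eq_IZR. Qed.

Definition lpoint : Type := (Z * Z)%type.
Definition ledge : Type := (lpoint * lpoint)%type.

Definition embed (u : lpoint) : point := (IZR (fst u), IZR (snd u)).
Definition embed_edge (e : ledge) : dedge := (embed (fst e), embed (snd e)).

Definition lpoint_eqb (u v : lpoint) : bool := Z.eqb (fst u) (fst v) && Z.eqb (snd u) (snd v).
Definition ledge_eqb (e f : ledge) : bool := lpoint_eqb (fst e) (fst f) && lpoint_eqb (snd e) (snd f).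

Lemma lpoint_eqb_spec u v : lpoint_eqb u v = true <-> u = v.
Proof.
  destruct u, v; unfold lpoint_eqb; simpl; rewrite andb_true_iff, !Z.eqb_eq; split.
  - intros [-> ->]; reflexivity.
  - intros H; inversion H; auto.
Qed.

Lemma ledge_eqb_spec e f : ledge_eqb e f = true <-> e = f.
Proof.
  destruct e, f; unfold ledge_eqb; simpl; rewrite andb_true_iff, !lpoint_eqb_spec; split.
  - intros [-> ->]; reflexivity.
  - intros H; inversion H; auto.
Qed.

Lemma embed_inj u v : embed u = embed v <-> u = v.
Proof.
  split; [|intros ->; reflexivity].
  destruct u, v; unfold embed; simpl; intros H.
  inversion H as [[H1 H2]]; apply eq_IZR in H1, H2; subst; reflexivity.
Qed.

Lemma embed_edge_inj e f : embed_edge e = embed_edge f -> e = f.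
Proof.
  destruct e as [a b], f as [c d]; unfold embed_edge; simpl; intros H.
  assert (Ha : embed a = embed c) by congruence.
  assert (Hb : embed b = embed d) by congruence.
  apply embed_inj in Ha, Hb; subst; reflexivity.
Qed.

Lemma map_px_embed l : map px (map embed l) = map IZR (map fst l).
Proof. rewrite !map_map; reflexivity. Qed.

Lemma map_py_embed l : map py (map embed l) = map IZR (map snd l).
Proof. rewrite !map_map; reflexivity. Qed.

Definition l1z (u v : lpoint) : Z := (Z.abs (fst u - fst v) + Z.abs (snd u - snd v))%Z.

Lemma l1_embed u v : l1 (embed u) (embed v) = IZR (l1z u v).
Proof. unfold l1, l1z, embed, px, py; simpl; rewrite plus_IZR, !abs_IZR, !minus_IZR; reflexivity. Qed.

Definition strictly_between (a b x : Z) : bool := (Z.min a b <? x)%Z && (x <? Z.max a b)%Z.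

Lemma no_value_between_spec a b l :
  (forall x, In x (map IZR l) -> ~ (Rmin (IZR a) (IZR b) < x < Rmax (IZR a) (IZR b)))
  <-> forallb (fun x => negb (strictly_between a b x)) l = true.
Proof.
  rewrite forallb_forall, Rmin_IZR, Rmax_IZR; unfold strictly_between; split; intros H z Hz.
  - specialize (H (IZR z) (in_map IZR l z Hz)).
    rewrite negb_true_iff, <- not_true_iff_false, andb_true_iff, !Z.ltb_lt.
    rewrite !IZR_lt_iff in H; exact H.
  - apply In_map_IZR_inv in Hz as [x [-> Hx]]; specialize (H x Hx).
    rewrite negb_true_iff, <- not_true_iff_false, andb_true_iff, !Z.ltb_lt in H.
    rewrite !IZR_lt_iff; exact H.
Qed.

Definition grid_edgeb (Tz : list lpoint) (u v : lpoint) : bool :=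
  let Xs := map fst Tz in
  let Ys := map snd Tz in
  (memb Z.eqb (snd u) Ys && Z.eqb (snd u) (snd v) && memb Z.eqb (fst u) Xs &&
   memb Z.eqb (fst v) Xs && negb (Z.eqb (fst u) (fst v)) &&
   forallb (fun x => negb (strictly_between (fst u) (fst v) x)) Xs)
  || (memb Z.eqb (fst u) Xs && Z.eqb (fst u) (fst v) && memb Z.eqb (snd u) Ys &&
   memb Z.eqb (snd v) Ys && negb (Z.eqb (snd u) (snd v)) &&
   forallb (fun y => negb (strictly_between (snd u) (snd v) y)) Ys).

Lemma grid_edgeb_spec Tz u v : grid_edge (map embed Tz) (embed u) (embed v) <-> grid_edgeb Tz u v = true.
Proof.
  unfold grid_edge, grid_edgeb; rewrite map_px_embed, map_py_embed.
  destruct u as [a b], v as [c d]; unfold embed, px, py; simpl.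
  rewrite !no_value_between_spec, orb_true_iff, !andb_true_iff, !In_map_IZR,
    !(memb_spec _ _ Z.eqb_eq), !negb_true_iff, !Z.eqb_eq, !Z.eqb_neq.
  unfold not; rewrite !IZR_eq_iff; tauto.
Qed.

Definition cw_boundaryb (a b p q : lpoint) : bool :=
  let x1 := Z.min (fst a) (fst b) in let x2 := Z.max (fst a) (fst b) in
  let y1 := Z.min (snd a) (snd b) in let y2 := Z.max (snd a) (snd b) in
  (Z.eqb (snd p) y2 && Z.eqb (snd q) y2 && Z.leb x1 (fst p) && Z.ltb (fst p) (fst q) && Z.leb (fst q) x2) ||
  (Z.eqb (fst p) x2 && Z.eqb (fst q) x2 && Z.leb y1 (snd q) && Z.ltb (snd q) (snd p) && Z.leb (snd p) y2) ||
  (Z.eqb (snd p) y1 && Z.eqb (snd q) y1 && Z.leb x1 (fst q) && Z.ltb (fst q) (fst p) && Z.leb (fst p) x2) ||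
  (Z.eqb (fst p) x1 && Z.eqb (fst q) x1 && Z.leb y1 (snd p) && Z.ltb (snd p) (snd q) && Z.leb (snd q) y2).

Lemma cw_boundaryb_spec a b p q :
  cw_boundary (embed a) (embed b) (embed p) (embed q) <-> cw_boundaryb a b p q = true.
Proof.
  unfold cw_boundary, cw_boundaryb, embed, px, py; simpl.
  rewrite !Rmin_IZR, !Rmax_IZR, !orb_true_iff, !andb_true_iff, !IZR_eq_iff, !IZR_le_iff,
    !IZR_lt_iff, !Z.eqb_eq, !Z.leb_le, !Z.ltb_lt.
  tauto.
Qed.

Definition pos_slopeb (a b : lpoint) : bool := (0 <? (fst b - fst a) * (snd b - snd a))%Z.

Lemma pos_slopeb_spec a b : pos_slope (embed a) (embed b) <-> pos_slopeb a b = true.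
Proof.
  unfold pos_slope, pos_slopeb, embed, px, py; simpl.
  rewrite <- !minus_IZR, <- mult_IZR, IZR_lt_iff, Z.ltb_lt; tauto.
Qed.

Definition in_rectb (a b p : lpoint) : bool :=
  Z.leb (Z.min (fst a) (fst b)) (fst p) && Z.leb (fst p) (Z.max (fst a) (fst b)) &&
  Z.leb (Z.min (snd a) (snd b)) (snd p) && Z.leb (snd p) (Z.max (snd a) (snd b)).

Lemma in_rectb_spec a b p : in_rect (embed a) (embed b) (embed p) <-> in_rectb a b p = true.
Proof.
  unfold in_rect, in_rectb, embed, px, py; simpl.
  rewrite !Rmin_IZR, !Rmax_IZR, !andb_true_iff, !IZR_le_iff, !Z.leb_le; tauto.
Qed.

Definition empty_rectb (Tz : list lpoint) (a b : lpoint) : bool :=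
  forallb (fun t => negb (in_rectb a b t) || lpoint_eqb t a || lpoint_eqb t b) Tz.

Lemma empty_rectb_spec Tz a b : empty_rect (map embed Tz) (embed a) (embed b) <-> empty_rectb Tz a b = true.
Proof.
  unfold empty_rect, empty_rectb; rewrite forallb_forall; split; intros H t Ht.
  - specialize (H (embed t) (in_map embed Tz t Ht)).
    rewrite in_rectb_spec, !embed_inj in H.
    destruct (in_rectb a b t); [|reflexivity].
    simpl; rewrite !orb_true_iff, !lpoint_eqb_spec; tauto.
  - apply in_map_iff in Ht as [z [<- Hz]]; specialize (H z Hz).
    rewrite in_rectb_spec, !embed_inj; intros Hr; rewrite Hr in H.
    simpl in H; rewrite orb_true_iff, !lpoint_eqb_spec in H; tauto.
Qed.

Definition in_N_emptyb (Tz : list lpoint) (u v : lpoint) : bool :=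
  grid_edgeb Tz u v &&
  existsb (fun a => existsb (fun b =>
     negb (lpoint_eqb a b) && empty_rectb Tz a b &&
     ((pos_slopeb a b && cw_boundaryb a b u v) || (negb (pos_slopeb a b) && cw_boundaryb a b v u))) Tz) Tz.

Lemma in_N_emptyb_spec Tz u v : in_N_empty (map embed Tz) (embed u) (embed v) <-> in_N_emptyb Tz u v = true.
Proof.
  unfold in_N_empty, in_N_emptyb; rewrite andb_true_iff, grid_edgeb_spec, existsb_exists.
  apply and_iff_compat_l; unfold ccw_boundary; split.
  - intros [a [b [Ha [Hb [Hab [He Hs]]]]]].
    apply in_map_iff in Ha as [a' [<- Ha]]; apply in_map_iff in Hb as [b' [<- Hb]].
    exists a'; split; [exact Ha|]; apply existsb_exists; exists b'; split; [exact Hb|].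
    rewrite embed_inj, <- lpoint_eqb_spec in Hab.
    rewrite empty_rectb_spec, pos_slopeb_spec, !cw_boundaryb_spec in *.
    rewrite !andb_true_iff, orb_true_iff, !andb_true_iff, !negb_true_iff, <- !not_true_iff_false.
    tauto.
  - intros [a [Ha H]]; apply existsb_exists in H as [b [Hb H]].
    exists (embed a), (embed b); split; [apply in_map; exact Ha|]; split; [apply in_map; exact Hb|].
    rewrite embed_inj, <- lpoint_eqb_spec, empty_rectb_spec, pos_slopeb_spec, !cw_boundaryb_spec.
    rewrite !andb_true_iff, orb_true_iff, !andb_true_iff, !negb_true_iff, <- !not_true_iff_false in H.
    tauto.
Qed.

(* N_empty(T) of a lattice terminal set, computed by enumerating all ordered
   pairs of grid vertices.  This is exact because every edge of Gamma(T)
   joins two grid vertices. *)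
Definition grid_points (Tz : list lpoint) : list lpoint := list_prod (map fst Tz) (map snd Tz).

Definition lattice_N_empty (Tz : list lpoint) : list ledge :=
  filter (fun e => in_N_emptyb Tz (fst e) (snd e)) (list_prod (grid_points Tz) (grid_points Tz)).

Lemma grid_edge_endpoints Tz p q : grid_edge (map embed Tz) p q ->
  exists u v, In u (grid_points Tz) /\ In v (grid_points Tz) /\ p = embed u /\ q = embed v.
Proof.
  unfold grid_edge, grid_points; rewrite map_px_embed, map_py_embed.
  destruct p as [p1 p2], q as [q1 q2]; unfold px, py; simpl.
  intros [[Hy [<- [Hx1 [Hx2 _]]]] | [Hx [<- [Hy1 [Hy2 _]]]]].
  - apply In_map_IZR_inv in Hy as [y [-> Hy]].
    apply In_map_IZR_inv in Hx1 as [x1 [-> Hx1]]; apply In_map_IZR_inv in Hx2 as [x2 [-> Hx2]].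
    exists (x1, y), (x2, y); repeat split; apply in_prod; assumption.
  - apply In_map_IZR_inv in Hx as [x [-> Hx]].
    apply In_map_IZR_inv in Hy1 as [y1 [-> Hy1]]; apply In_map_IZR_inv in Hy2 as [y2 [-> Hy2]].
    exists (x, y1), (x, y2); repeat split; apply in_prod; assumption.
Qed.

Lemma lattice_N_empty_spec Tz p q :
  In (p, q) (map embed_edge (lattice_N_empty Tz)) <-> in_N_empty (map embed Tz) p q.
Proof.
  unfold lattice_N_empty; split.
  - intros H; apply in_map_iff in H as [[u v] [E H]]; injection E as <- <-.
    apply filter_In in H as [_ H]; apply in_N_emptyb_spec; exact H.
  - intros H; destruct (grid_edge_endpoints Tz p q (proj1 H)) as [u [v [Hu [Hv [-> ->]]]]].
    apply (in_map embed_edge _ (u, v)), filter_In; split.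
    + apply in_prod; assumption.
    + apply in_N_emptyb_spec; exact H.
Qed.

(* Directed paths whose every step decreases the L1 distance to the target by
   the step length are shortest paths. *)
Fixpoint find_map {A B : Type} (f : A -> option B) (l : list A) : option B :=
  match l with
  | [] => None
  | x :: r => match f x with Some y => Some y | None => find_map f r end
  end.

Lemma find_map_Some {A B : Type} (f : A -> option B) l y :
  find_map f l = Some y -> exists x, In x l /\ f x = Some y.
Proof.
  induction l as [|x r IH]; simpl; [discriminate|].
  destruct (f x) eqn:E.
  - intros H; injection H as <-; exists x; auto.
  - intros H; destruct (IH H) as [z [Hz Hf]]; exists z; auto.
Qed.

Fixpoint monotone_path (N : list ledge) (fuel : nat) (s t : lpoint) : option (list lpoint) :=
  if lpoint_eqb s t then Some [] else
  match fuel with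
  | O => None
  | S fuel' =>
      find_map (fun e : ledge =>
        if lpoint_eqb (fst e) s && Z.eqb (l1z s (snd e) + l1z (snd e) t) (l1z s t)
        then option_map (cons (snd e)) (monotone_path N fuel' (snd e) t)
        else None) N
  end.

Lemma monotone_path_sound N fuel s t vs : monotone_path N fuel s t = Some vs ->
  dpath (map embed_edge N) (embed s) (map embed vs) (embed t) /\
  path_len (embed s) (map embed vs) = l1 (embed s) (embed t).
Proof.
  revert s vs; induction fuel as [|fuel IH]; intros s vs; simpl;
    destruct (lpoint_eqb s t) eqn:Est; try discriminate.
  1,2: intros H; injection H as <-; apply lpoint_eqb_spec in Est as <-; split; [reflexivity|].
  1,2: simpl; rewrite l1_embed; replace (l1z s s) with 0%Z by (unfold l1z; lia); reflexivity.
  intros H; apply find_map_Some in H as [[s' v] [Hin H]]; simpl in H.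
  destruct (lpoint_eqb s' s && _) eqn:Hstep; [|discriminate].
  destruct (monotone_path N fuel v t) as [ws|] eqn:Hrest; simpl in H; [|discriminate].
  injection H as <-; apply andb_true_iff in Hstep as [Hs Hdist].
  apply lpoint_eqb_spec in Hs as ->; apply Z.eqb_eq in Hdist.
  destruct (IH v ws Hrest) as [Hpath Hlen]; simpl; split.
  - split; [exact (in_map embed_edge N (s, v) Hin) | exact Hpath].
  - rewrite Hlen, !l1_embed, <- plus_IZR, Hdist; reflexivity.
Qed.

Definition bidirected_MNb (Tz : list lpoint) (N : list ledge) : bool :=
  nodupb ledge_eqb N &&
  forallb (fun e => grid_edgeb Tz (fst e) (snd e) && negb (memb ledge_eqb (snd e, fst e) N)) N &&
  forallb (fun s => forallb (fun t =>
    lpoint_eqb s t ||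
    match monotone_path N (length N) s t with Some _ => true | None => false end) Tz) Tz.

Lemma bidirected_MNb_sound Tz N : bidirected_MNb Tz N = true -> bidirected_MN (map embed Tz) (map embed_edge N).
Proof.
  unfold bidirected_MNb; rewrite !andb_true_iff, !forallb_forall.
  intros [[Hnodup Hedges] Hpaths]; split; [split; [|split]|].
  - apply (Injective_map_NoDup embed_edge_inj), (nodupb_NoDup _ _ ledge_eqb_spec), Hnodup.
  - intros p q H; apply in_map_iff in H as [[u v] [E H]]; injection E as <- <-.
    apply grid_edgeb_spec; specialize (Hedges _ H); apply andb_true_iff in Hedges; tauto.
  - intros p q H H'; apply in_map_iff in H as [[u v] [E H]]; injection E as <- <-.
    apply in_map_iff in H' as [e' [E' H']].
    replace e' with (v, u) in H' by (symmetry; apply embed_edge_inj; exact E').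
    specialize (Hedges _ H); simpl in Hedges.
    rewrite andb_true_iff, negb_true_iff, <- not_true_iff_false, (memb_spec _ _ ledge_eqb_spec) in Hedges.
    tauto.
  - intros t t' Ht Ht' Hne.
    apply in_map_iff in Ht as [s [<- Hs]]; apply in_map_iff in Ht' as [s' [<- Hs']].
    specialize (Hpaths _ Hs); rewrite forallb_forall in Hpaths; specialize (Hpaths _ Hs').
    apply orb_true_iff in Hpaths as [Heq|Hpath].
    + apply lpoint_eqb_spec in Heq; subst; contradiction.
    + destruct (monotone_path N (length N) s s') as [vs|] eqn:Hmp; [|discriminate].
      exists (map embed vs); exact (monotone_path_sound _ _ _ _ _ Hmp).
Qed.

Definition net_lengthz (N : list ledge) : Z :=
  fold_right (fun e acc => (l1z (fst e) (snd e) + acc)%Z) 0%Z N.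

Lemma net_length_embed N : net_length (map embed_edge N) = IZR (net_lengthz N).
Proof.
  induction N as [|e N IH]; simpl; [reflexivity|].
  rewrite IH, plus_IZR; unfold edge_len, embed_edge; simpl; rewrite l1_embed; reflexivity.
Qed.

Definition T5 : list lpoint := [(0,0); (1,3); (2,4); (3,1); (4,2)]%Z.

Definition NE5 : list ledge := lattice_N_empty T5.

Definition redundant_corner : lpoint := (4, 4)%Z.

Definition N5 : list ledge :=
  filter (fun e => negb (lpoint_eqb (fst e) redundant_corner || lpoint_eqb (snd e) redundant_corner)) NE5.

Lemma instance_facts :
  nodupb Z.eqb (map fst T5) = true /\ nodupb Z.eqb (map snd T5) = true /\
  bidirected_MNb T5 NE5 = true /\ net_lengthz NE5 = 34%Z /\
  bidirected_MNb T5 N5 = true /\ net_lengthz N5 = 32%Z.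
Proof. vm_compute; repeat split. Qed.

Theorem mainTheorem6 :
  exists T : list point,
    length T = 5%nat /\
    NoDup (map px T) /\ NoDup (map py T) /\
    exists NE : list dedge,
      (forall p q, In (p, q) NE <-> in_N_empty T p q) /\
      bidirected_MN T NE /\
      net_length NE = 34 /\
      exists N : list dedge, bidirected_MN T N /\ net_length N = 32.
Proof.
  destruct instance_facts as (Hxs & Hys & HNE & HNE34 & HN & HN32).
  exists (map embed T5); split; [reflexivity|].
  split; [rewrite map_px_embed; apply NoDup_map_IZR, (nodupb_NoDup _ _ Z.eqb_eq), Hxs|].
  split; [rewrite map_py_embed; apply NoDup_map_IZR, (nodupb_NoDup _ _ Z.eqb_eq), Hys|].
  exists (map embed_edge NE5); split; [exact (lattice_N_empty_spec T5)|].
  split; [exact (bidirected_MNb_sound _ _ HNE)|].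
  split; [rewrite net_length_embed, HNE34; reflexivity|].
  exists (map embed_edge N5); split; [exact (bidirected_MNb_sound _ _ HN)|].
  rewrite net_length_embed, HN32; reflexivity.
Qed.
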